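(* Let $p(\mathbf{Q},E)$ be an arbitrage-free answer-dependent pricing function, and let $g:\mathbb{R}_{\ge0}^{\mathcal{I}}\to\mathbb{R}_{\ge0}$ be monotone and subadditive. For $\mathbf{Q}\in B(\mathcal{L})$ let $\vec p(\mathbf{Q})=\langle p(\mathbf{Q},\mathbf{Q}(D))\mid D\in\mathcal{I}\rangle$. Then $p(\mathbf{Q})=g(\vec p(\mathbf{Q}))$ is an arbitrage-free instance-independent pricing function.
   Context: $\mathcal{I}$ is a countable nonempty set of database instances; queries are deterministic functions on $\mathcal{I}$; a query bundle is a finite tuple of queries from a language $\mathcal{L}$, evaluated componentwise; $B(\mathcal{L})$ is the set of bundles, closed under concatenation $\mathbf{Q}_1,\mathbf{Q}_2$. $g$ monotone: $x\le y$ coordinatewise implies $g(x)\le g(y)$; subadditive: $g(x+y)\le g(x)+g(y)$. Answer-dependent arbitrage-freeness of $p(\mathbf{Q},E)$: (i) for all $D\in\mathcal{I}$, if every $D'\in\mathcal{I}$ with $\mathbf{Q}_2(D')=\mathbf{Q}_2(D)$ satisfies $\mathbf{Q}_1(D')=\mathbf{Q}_1(D)$, then $p(\mathbf{Q}_2,\mathbf{Q}_2(D))\ge p(\mathbf{Q}_1,\mathbf{Q}_1(D))$; (ii) for all $D$, $p(\mathbf{Q},\mathbf{Q}(D))\le p(\mathbf{Q}_1,\mathbf{Q}_1(D))+p(\mathbf{Q}_2,\mathbf{Q}_2(D))$ where $\mathbf{Q}=\mathbf{Q}_1,\mathbf{Q}_2$. Instance-independent arbitrage-freeness of $p(\mathbf{Q})$: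 (i) if for all $D',D''\in\mathcal{I}$, $\mathbf{Q}_2(D')=\mathbf{Q}_2(D'')$ implies $\mathbf{Q}_1(D')=\mathbf{Q}_1(D'')$, then $p(\mathbf{Q}_2)\ge p(\mathbf{Q}_1)$; (ii) $p(\mathbf{Q}_1,\mathbf{Q}_2)\le p(\mathbf{Q}_1)+p(\mathbf{Q}_2)$. *)

From Stdlib Require List.
From HB Require Import structures.
From mathcomp Require Import all_boot all_order all_algebra.
Set Implicit Arguments. Unset Strict Implicit. Unset Printing Implicit Defensive.
Import Order.TTheory GRing.Theory Num.Theory.
Local Open Scope ring_scope.

(* Queries: deterministic functions I -> Ans (Ans an
   arbitrary answer type). *)

Definition eval_bundle (I Ans : Type) (Q : seq (I -> Ans)) (D : I) : seq Ans :=
  map (fun q => q D) Q.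

Definition in_bundles (I Ans : Type) (L : (I -> Ans) -> Prop) (Q : seq (I -> Ans)) : Prop :=
  List.Forall L Q.

Definition ad_arbitrage_free (R : realFieldType) (I Ans : Type)
    (L : (I -> Ans) -> Prop) (p : seq (I -> Ans) -> seq Ans -> R) : Prop :=
  (forall Q1 Q2, in_bundles L Q1 -> in_bundles L Q2 ->
     forall D : I,
       (forall D' : I, eval_bundle Q2 D' = eval_bundle Q2 D ->
                       eval_bundle Q1 D' = eval_bundle Q1 D) ->
       p Q1 (eval_bundle Q1 D) <= p Q2 (eval_bundle Q2 D))
  /\
  (forall Q1 Q2, in_bundles L Q1 -> in_bundles L Q2 ->
     forall D : I,
       p (Q1 ++ Q2) (eval_bundle (Q1 ++ Q2) D)
         <= p Q1 (eval_bundle Q1 D) + p Q2 (eval_bundle Q2 D)).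

Definition ii_arbitrage_free (R : realFieldType) (I Ans : Type)
    (L : (I -> Ans) -> Prop) (p : seq (I -> Ans) -> R) : Prop :=
  (forall Q1 Q2, in_bundles L Q1 -> in_bundles L Q2 ->
       (forall D' D'' : I, eval_bundle Q2 D' = eval_bundle Q2 D'' ->
                           eval_bundle Q1 D' = eval_bundle Q1 D'') ->
       p Q1 <= p Q2)
  /\
  (forall Q1 Q2, in_bundles L Q1 -> in_bundles L Q2 ->
       p (Q1 ++ Q2) <= p Q1 + p Q2).

Definition nonneg_vec (R : realFieldType) (I : Type) (x : I -> R) : Prop :=
  forall i, 0 <= x i.

Definition nonneg_valued (R : realFieldType) (I : Type) (g : (I -> R) -> R) : Prop :=
  forall x, nonneg_vec x -> 0 <= g x.

Definition monotone_vec (R : realFieldType) (I : Type) (g : (I -> R) -> R) : Prop :=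
  forall x y, nonneg_vec x -> nonneg_vec y -> (forall i, x i <= y i) -> g x <= g y.

Definition subadditive_vec (R : realFieldType) (I : Type) (g : (I -> R) -> R) : Prop :=
  forall x y, nonneg_vec x -> nonneg_vec y -> g (fun i => x i + y i) <= g x + g y.

Definition price_vec (R : realFieldType) (I Ans : Type)
    (p : seq (I -> Ans) -> seq Ans -> R) (Q : seq (I -> Ans)) : I -> R :=
  fun D => p Q (eval_bundle Q D).

From mathcomp Require Import all_boot all_order all_algebra.
Set Implicit Arguments. Unset Strict Implicit. Unset Printing Implicit Defensive.
Import Order.TTheory GRing.Theory Num.Theory.
Local Open Scope ring_scope.

(* Both arbitrage-freeness conditions of the answer-dependent price hold
   instance by instance, i.e. coordinatewise for the price vectors; a
   monotone subadditive g carries coordinatewise inequalities between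
   nonnegative vectors over to their images. *)

Lemma in_bundles_cat (I Ans : Type) (L : (I -> Ans) -> Prop) Q1 Q2 :
  in_bundles L Q1 -> in_bundles L Q2 -> in_bundles L (Q1 ++ Q2).
Proof. by move=> H1 H2; apply/List.Forall_app. Qed.

Section PriceVector.

Variables (R : realFieldType) (I Ans : Type) (L : (I -> Ans) -> Prop).
Variable p : seq (I -> Ans) -> seq Ans -> R.

Lemma price_vec_nonneg Q :
  (forall E, 0 <= p Q E) -> nonneg_vec (price_vec p Q).
Proof. by move=> p_ge0 D; apply: p_ge0. Qed.

Hypothesis p_af : ad_arbitrage_free L p.

Lemma price_vec_le_determined Q1 Q2 :
  in_bundles L Q1 -> in_bundles L Q2 ->
  (forall D' D'' : I, eval_bundle Q2 D' = eval_bundle Q2 D'' ->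
                      eval_bundle Q1 D' = eval_bundle Q1 D'') ->
  forall D, price_vec p Q1 D <= price_vec p Q2 D.
Proof. by move=> LQ1 LQ2 det D; apply: p_af.1 => // D'; apply: det. Qed.

Lemma price_vec_cat_le Q1 Q2 :
  in_bundles L Q1 -> in_bundles L Q2 ->
  forall D, price_vec p (Q1 ++ Q2) D <= price_vec p Q1 D + price_vec p Q2 D.
Proof. by move=> LQ1 LQ2 D; apply: p_af.2. Qed.

End PriceVector.

Theorem lemma16 (R : realFieldType) (I : countType) (D0 : I) (Ans : Type)
  (L : (I -> Ans) -> Prop)
  (p : seq (I -> Ans) -> seq Ans -> R) (g : (I -> R) -> R) :
  (forall Q E, in_bundles L Q -> 0 <= p Q E) ->
  ad_arbitrage_free L p ->
  nonneg_valued g -> monotone_vec g -> subadditive_vec g ->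
  (forall Q, in_bundles L Q -> 0 <= g (price_vec p Q)) /\
  ii_arbitrage_free L (fun Q => g (price_vec p Q)).
Proof.
move=> p_ge0 p_af g_ge0 g_mono g_sub.
have pv_ge0 Q : in_bundles L Q -> nonneg_vec (price_vec p Q).
  by move=> LQ; apply: price_vec_nonneg => E; apply: p_ge0.
split; first by move=> Q LQ; apply/g_ge0/pv_ge0.
split=> Q1 Q2 LQ1 LQ2.
  move=> det; apply: g_mono; [exact: pv_ge0 | exact: pv_ge0 |].
  move=> D; exact: (price_vec_le_determined p_af LQ1 LQ2 det D).
apply: le_trans (g_sub _ _ (pv_ge0 _ LQ1) (pv_ge0 _ LQ2)).
apply: g_mono.
- exact: pv_ge0 (in_bundles_cat LQ1 LQ2).
- by move=> D; apply: addr_ge0; apply: pv_ge0.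
- move=> D; exact: (price_vec_cat_le p_af LQ1 LQ2 D).
Qed.
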